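(* Fix an outcome $s$, vectors $\mathbf{q}^b,\mathbf{q}^p\in\mathbb{R}^N$ and a demand $\mathbf{d}_s\in\mathbb{R}^N$. Let $\mathbf{r}^p_s$ be an optimal solution of $FR(\mathbf{q}^b,\mathbf{q}^p,\mathbf{d}_s)$ and $(\mathbf{r}^{p\prime}_s,\boldsymbol\omega_s',\mathbf{v}_s',\boldsymbol\phi_s')$ an optimal solution of $FR'(\mathbf{q}^b,\mathbf{q}^p,\mathbf{d}_s)$. Then: (i) $\boldsymbol\omega_s'=0$; (ii) $\mathbf{r}^p_s=\mathbf{r}^{p\prime}_s$; (iii) $\mathbf{H}(\mathbf{q}^b+\mathbf{q}^p+\mathbf{r}^p_s-\mathbf{d}_s)=\mathbf{B}\mathbf{C}^\top\boldsymbol\phi_s'$. Moreover, there exist $\boldsymbol\theta_s'\in\mathbb{R}^N$ and $\mathbf{y}_s'\in\mathbb{R}^L$ with $\mathbf{C}\mathbf{y}_s'=0$ such that $\mathbf{v}_s'=\mathbf{B}\mathbf{C}^\top\boldsymbol\theta_s'+\mathbf{y}_s'$ and $\mathbf{B}\mathbf{C}^\top\boldsymbol\phi_s'=\mathbf{B}\mathbf{C}^\top\boldsymbol\theta_s'$. Finally, $(\mathbf{r}^{p\prime}_s,\boldsymbol\omega_s',\boldsymbol\theta_s',\boldsymbol\phi_s',\boldsymbol\pi_s^{p\prime},\underline{\boldsymbol\mu}_s',\bar{\boldsymbol\mu}_s')$ is an equilibrium point of the closed-loop dynamics described in the context if and only if $(\mathbf{r}^{p\prime}_s,\boldsymbol\omega_s',\mathbf{v}_s',\boldsymbol\phi_s',\boldsymbol\pi_s^{p\prime},\underline{\boldsymbol\mu}_s',\bar{\boldsymbol\mu}_s')$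 is a primal-dual optimal solution of $FR'$, where $\boldsymbol\omega_s'$, $\boldsymbol\pi_s^{p\prime}$ and $(\underline{\boldsymbol\mu}_s',\bar{\boldsymbol\mu}_s')$ are the Lagrange multipliers associated with constraints (b), (c) and (d) of $FR'$, respectively.
   Context: Network: connected directed graph with node set $N$ (also its cardinality) and link set $L$, incidence matrix $\mathbf{C}\in\mathbb{R}^{N\times L}$, $\mathbf{B}=\mathrm{diag}(B_l)$ with $B_l>0$, $\mathbf{L}=\mathbf{C}\mathbf{B}\mathbf{C}^\top$, $\mathbf{H}=\mathbf{B}\mathbf{C}^\top\mathbf{L}^\dagger$, line capacities $\mathbf{f}\in\mathbb{R}^L$, $\mathbf{1}$ the all-ones vector. At each node $n$ a regulation generator has capacity $[\underline{q}_n^p,\bar{q}_n^p]$ and strictly convex continuously differentiable cost $c_n^p$ of its total output; $c_n^{p\prime}$ is its derivative and $c_n^{p\prime-1}$ the inverse of the derivative. $\mathbf{D}=\mathrm{diag}(D_n)$ (damping, $D_n>0$), $\mathbf{M}=\mathrm{diag}(M_n)$ (inertia, $M_n>0$). $FR(\mathbf{q}^b,\mathbf{q}^p,\mathbf{d}_s)$: minimize $\sum_n c_n^p(q^p_n+r^p_{s,n})$ over $\mathbf{r}^p_s\in\mathbb{R}^N$ subject to $\underline{\mathbf{q}}^p\le\mathbf{q}^p+\mathbf{r}^p_s\le\bar{\mathbf{q}}^p$, $\mathbf{1}^\top(\mathbf{q}^b+\mathbf{q}^p+\mathbf{r}^p_s-\mathbf{d}_s)=0$, $-\mathbf{f}\le\mathbf{H}(\mathbf{q}^b+\mathbf{q}^p+\mathbf{r}^p_s-\mathbf{d}_s)\le\mathbf{f}$.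 $FR'(\mathbf{q}^b,\mathbf{q}^p,\mathbf{d}_s)$: minimize $\sum_n\big(c_n^p(q_n^p+r^p_{s,n})+D_n\omega_{s,n}^2/2\big)$ over $(\mathbf{r}^p_s,\boldsymbol\omega_s,\mathbf{v}_s,\boldsymbol\phi_s)\in\mathbb{R}^N\times\mathbb{R}^N\times\mathbb{R}^L\times\mathbb{R}^N$ subject to (b) $\mathbf{q}^b+\mathbf{q}^p+\mathbf{r}^p_s-\mathbf{d}_s-\mathbf{D}\boldsymbol\omega_s=\mathbf{C}\mathbf{v}_s$; (c) $\mathbf{q}^b+\mathbf{q}^p+\mathbf{r}^p_s-\mathbf{d}_s=\mathbf{L}\boldsymbol\phi_s$; (d) $-\mathbf{f}\le\mathbf{B}\mathbf{C}^\top\boldsymbol\phi_s\le\mathbf{f}$; (e) $\underline{\mathbf{q}}^p\le\mathbf{q}^p+\mathbf{r}^p_s\le\bar{\mathbf{q}}^p$. Closed-loop dynamics (time $t$, states $\boldsymbol\theta_s,\boldsymbol\omega_s,\boldsymbol\pi^p_s,\bar{\boldsymbol\mu}_s,\underline{\boldsymbol\mu}_s,\boldsymbol\phi_s$): $\dot{\boldsymbol\theta}_s=\boldsymbol\omega_s$; $\mathbf{M}\dot{\boldsymbol\omega}_s=\mathbf{q}^b+\mathbf{q}^p+\mathbf{r}^p_s(t)-\mathbf{d}_s-\mathbf{D}\boldsymbol\omega_s-\mathbf{L}\boldsymbol\theta_s$; $r^p_{s,n}(t)=\big[c_n^{p\prime-1}(-\omega_{s,n}(t)-\pi^p_{s,n}(t))-q^p_n\big]_{\underline{q}_n^p-q_n^p}^{\bar{q}_n^p-q_n^p}$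 where $[x]_a^b$ is the projection (clamp) of $x$ onto $[a,b]$; $\dot{\boldsymbol\pi}^p_s=\boldsymbol\zeta^\pi(\mathbf{q}^b+\mathbf{q}^p+\mathbf{r}^p_s(t)-\mathbf{d}_s-\mathbf{L}\boldsymbol\phi_s)$; $\dot{\bar{\boldsymbol\mu}}_s=\boldsymbol\zeta^{\bar\mu}[\mathbf{B}\mathbf{C}^\top\boldsymbol\phi_s-\mathbf{f}]^+_{\bar{\boldsymbol\mu}_s}$; $\dot{\underline{\boldsymbol\mu}}_s=\boldsymbol\zeta^{\underline\mu}[-\mathbf{f}-\mathbf{B}\mathbf{C}^\top\boldsymbol\phi_s]^+_{\underline{\boldsymbol\mu}_s}$; $\dot{\boldsymbol\phi}_s=\boldsymbol\chi^\phi(\mathbf{L}\boldsymbol\pi^p_s-\mathbf{C}\mathbf{B}(\bar{\boldsymbol\mu}_s-\underline{\boldsymbol\mu}_s))$. Here $\boldsymbol\zeta^\pi,\boldsymbol\chi^\phi\in\mathbb{R}^{N\times N}$ and $\boldsymbol\zeta^{\bar\mu},\boldsymbol\zeta^{\underline\mu}\in\mathbb{R}^{L\times L}$ are diagonal gain matrices, and $[\mathbf{y}]^+_{\mathbf{x}}$ is taken elementwise with $[y]^+_x=0$ if $x=0$ and $y<0$, and $[y]^+_x=y$ otherwise. *)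

From HB Require Import structures.
From mathcomp Require Import all_boot all_order all_algebra.
From mathcomp Require Import all_classical all_reals all_analysis.
Set Implicit Arguments.
Unset Strict Implicit.
Unset Printing Implicit Defensive.
Import Order.TTheory GRing.Theory Num.Theory.
Import numFieldNormedType.Exports.
Local Open Scope ring_scope.

Section Defs.
Variable R : realType.

Definition leV n (u v : 'cV[R]_n) : Prop := forall i, u i 0 <= v i 0.
Definition dotv n (u v : 'cV[R]_n) : R := \sum_i u i 0 * v i 0.

Definition incidence (N L : nat) (src dst : 'I_L -> 'I_N) : 'M[R]_(N, L) :=
  \matrix_(i, l) (((i == src l)%:R : R) - (i == dst l)%:R).

Definition graph_connected (N L : nat) (src dst : 'I_L -> 'I_N) : Prop :=
  forall i j : 'I_N, connect (fun a b : 'I_N =>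
    [exists l, ((src l == a) && (dst l == b)) || ((src l == b) && (dst l == a))]) i j.

Definition is_MP_pinv n (A X : 'M[R]_n) : Prop :=
  [/\ A *m X *m A = A, X *m A *m X = X, (A *m X)^T = A *m X & (X *m A)^T = X *m A].

Definition strictly_convex (g : R -> R) : Prop :=
  forall x y t, x != y -> 0 < t < 1 -> g (t * x + (1 - t) * y) < t * g x + (1 - t) * g y.

Definition cont_diff (g : R -> R) : Prop :=
  (forall x, derivable g x 1) /\ continuous (derive1 g : R -> R).

Definition clamp (a b x : R) : R := Num.max a (Num.min x b).
Definition projp (x y : R) : R := if (x == 0) && (y < 0) then 0 else y.

Variables (N L : nat).
Variables (C : 'M[R]_(N, L)) (B : 'M[R]_L) (Ldag : 'M[R]_N) (D M : 'M[R]_N).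
Variables (f : 'cV[R]_L) (qlo qhi : 'cV[R]_N) (c cinv : 'I_N -> R -> R).
Variables (qb qp d : 'cV[R]_N).

Definition lapl : 'M[R]_N := C *m B *m C^T.
Definition Hmx : 'M[R]_(L, N) := B *m C^T *m Ldag.

Definition inj (r : 'cV[R]_N) : 'cV[R]_N := qb + qp + r - d.

Definition FR_feasible (r : 'cV[R]_N) : Prop :=
  [/\ leV qlo (qp + r), leV (qp + r) qhi,
      \sum_i (inj r) i 0 = 0,
      leV (- f) (Hmx *m inj r) & leV (Hmx *m inj r) f].

Definition FR_cost (r : 'cV[R]_N) : R := \sum_n c n (qp n 0 + r n 0).

Definition FR_optimal (r : 'cV[R]_N) : Prop :=
  FR_feasible r /\ forall r2, FR_feasible r2 -> FR_cost r <= FR_cost r2.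

(* the "box" constraint (e), which carries no multiplier *)
Definition box (r : 'cV[R]_N) : Prop := leV qlo (qp + r) /\ leV (qp + r) qhi.

Definition FRp_feasible (r w : 'cV[R]_N) (v : 'cV[R]_L) (phi : 'cV[R]_N) : Prop :=
  [/\ inj r - D *m w = C *m v,                       (* (b) *)
      inj r = lapl *m phi,                           (* (c) *)
      (leV (- f) (B *m C^T *m phi) /\ leV (B *m C^T *m phi) f)   (* (d) *)
    & box r].                                        (* (e) *)

Definition FRp_cost (r w : 'cV[R]_N) : R :=
  \sum_n (c n (qp n 0 + r n 0) + D n n * (w n 0) ^+ 2 / 2).

Definition FRp_optimal r w v phi : Prop :=
  FRp_feasible r w v phi /\
  forall r2 w2 v2 phi2, FRp_feasible r2 w2 v2 phi2 ->
    FRp_cost r w <= FRp_cost r2 w2.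

(* Lagrangian of FR': multipliers lam (b), pi (c), muhi / mulo (upper/lower (d));
   (e) is kept as the domain of the primal variables. *)
Definition FRp_lagrangian r w v phi (lam pi : 'cV[R]_N) (mulo muhi : 'cV[R]_L) : R :=
  FRp_cost r w
  + dotv lam (inj r - D *m w - C *m v)
  + dotv pi (inj r - lapl *m phi)
  + dotv muhi (B *m C^T *m phi - f)
  + dotv mulo (- f - B *m C^T *m phi).

Definition FRp_dual lam pi mulo muhi : \bar R :=
  ereal_inf [set z : \bar R | exists r w v phi,
     box r /\ z = (FRp_lagrangian r w v phi lam pi mulo muhi)%:E].

Definition FRp_dual_feasible (lam pi : 'cV[R]_N) (mulo muhi : 'cV[R]_L) : Prop :=
  leV 0 mulo /\ leV 0 muhi.

Definition FRp_dual_optimal lam pi mulo muhi : Prop :=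
  FRp_dual_feasible lam pi mulo muhi /\
  forall lam2 pi2 mulo2 muhi2, FRp_dual_feasible lam2 pi2 mulo2 muhi2 ->
    (FRp_dual lam2 pi2 mulo2 muhi2 <= FRp_dual lam pi mulo muhi)%E.

(* primal-dual optimal solution (r, w, v, phi, pi, mulo, muhi) of FR', where w is
   simultaneously the primal variable and the multiplier of (b) *)
Definition FRp_primal_dual_optimal r w v phi pi mulo muhi : Prop :=
  FRp_optimal r w v phi /\ FRp_dual_optimal w pi mulo muhi.

Variables (Zpi Xphi : 'M[R]_N) (Zmuhi Zmulo : 'M[R]_L).

Definition r_ctrl (w pi : 'cV[R]_N) : 'cV[R]_N :=
  \col_n clamp (qlo n 0 - qp n 0) (qhi n 0 - qp n 0)
               (cinv n (- w n 0 - pi n 0) - qp n 0).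

(* equilibrium point (r, w, theta, phi, pi, mulo, muhi): the algebraic output r
   is given by the controller law, the state lies in the state space of the
   projected dynamics (multipliers nonnegative), and every time derivative is 0 *)
Definition cl_equilibrium (r w theta phi pi : 'cV[R]_N) (mulo muhi : 'cV[R]_L) : Prop :=
  r = r_ctrl w pi /\ (leV 0 mulo /\ leV 0 muhi) /\
  w = 0 /\                                                      (* theta-dot *)
  invmx M *m (inj r - D *m w - lapl *m theta) = 0 /\            (* omega-dot *)
  Zpi *m (inj r - lapl *m phi) = 0 /\
  Zmuhi *m (\col_l projp (muhi l 0) ((B *m C^T *m phi - f) l 0)) = 0 /\
  Zmulo *m (\col_l projp (mulo l 0) ((- f - B *m C^T *m phi) l 0)) = 0 /\
  Xphi *m (lapl *m pi - C *m B *m (muhi - mulo)) = 0.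

End Defs.

From Pilot Require Import Defs.
From HB Require Import structures.
From mathcomp Require Import all_boot all_order all_algebra.
From mathcomp Require Import all_classical all_reals all_analysis.
From mathcomp Require Import ring lra.
Set Implicit Arguments.
Unset Strict Implicit.
Unset Printing Implicit Defensive.
Import Order.TTheory GRing.Theory Num.Theory.
Import numFieldNormedType.Exports.
Local Open Scope classical_set_scope.
Local Open Scope ring_scope.

(* Dropping the frequency deviation [w] from a feasible point of FR' keeps it
   feasible and saves the damping cost, so optimal points have [w = 0].  With
   [w = 0], FR' is FR written with node potentials [phi]: on a connected graph
   the injections determine the flows [B C^T phi] through the Laplacian, and
   strict convexity makes the optimum unique.
   An equilibrium of the dynamics is exactly a KKT point (the controller output
   minimises the Lagrangian over the box, stationarity in [phi], complementary
   slackness), hence primal-dual optimal by weak duality.  Conversely, optimal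
   multipliers are stationary, since otherwise the dual is unbounded below, and
   Danskin's argument shows that the Lagrangian minimiser is feasible and
   complementary to them; it then coincides with the primal optimum by strict
   convexity. *)

Section Clamp.
Variable R : realType.
Implicit Types a b x : R.

Lemma clamp_cases a b x : a <= b ->
  [\/ x <= a /\ clamp a b x = a, a <= x <= b /\ clamp a b x = x
    | b <= x /\ clamp a b x = b].
Proof.
move=> ab; rewrite /clamp; case: (leP x b) => [xb|/ltW bx].
- by case: (leP a x) => [ax|/ltW xa]; [apply: Or32 | apply: Or31].
- by apply: Or33; rewrite max_r.
Qed.

Lemma clamp_itv a b x : a <= b -> a <= clamp a b x <= b.
Proof. by move=> ab; case: (clamp_cases x ab) => -[h ->]; rewrite ?lexx ?ab. Qed.

Lemma clamp_continuous a b : continuous (clamp a b).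
Proof.
move=> x; have := @continuous_max R R (cst a) (fun y : R => Order.min y b) x.
apply; first exact: cst_continuous.
by have := @continuous_min R R id (cst b) x; apply=> //; exact: cst_continuous.
Qed.

End Clamp.

Lemma strictly_convex_mid (R : realType) (g : R -> R) x y :
  strictly_convex g -> x != y -> g ((x + y) / 2) < (g x + g y) / 2.
Proof.
move=> /(_ x y 2^-1) + xy; have h2 : 0 < (2 : R)^-1 < 1.
  by rewrite invr_gt0 invf_lt1 ?ltr0n ?ltr1n.
have -> : (1 : R) - 2^-1 = 2^-1 by field.
by move=> /(_ xy h2); congr (g _ < _); field.
Qed.

Section ConvexScalar.
Variables (R : realType) (g ginv : R -> R).
Hypotheses (g_convex : strictly_convex g) (g_derivable : forall x, derivable g x 1)
  (g'_continuous : continuous (derive1 g)) (g'K : cancel (derive1 g) ginv)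
  (ginvK : cancel ginv (derive1 g)).
Local Notation g' := (derive1 g).

Let g_MVT (a b : R) : a < b -> exists2 c, c \in `]a, b[ & g b - g a = g' c * (b - a).
Proof.
move=> ab; apply: MVT => // [x _|]; first by rewrite derive1E; exact: derivableP.
apply: continuous_subspaceT => x; apply: differentiable_continuous.
by rewrite -derivable1_diffP.
Qed.

(* A continuous injective function is monotone; the convexity of [g] on
   [0, 2] fixes the direction. *)
Lemma derive1_mono : {mono g' : x y / x <= y}.
Proof.
move=> x y; apply: (@itv_continuous_inj_le _ _ `]-oo, +oo[) => //; last 2 first.
- exact: continuous_subspaceT.
- by move=> u v _ _ /(congr1 ginv); rewrite !g'K.
have [c1 c1i e1] := @g_MVT 0 1 ltr01.
have [c2 c2i e2] := @g_MVT 1 2 (ltr_nat R 1 2).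
exists c1, c2; split => //.
  by move: c1i c2i; rewrite !in_itv /= => /andP[_ /lt_trans] + /andP[+ _]; apply.
have := strictly_convex_mid g_convex (_ : 0 != 2); rewrite eq_sym pnatr_eq0 => /(_ isT).
rewrite add0r divff ?pnatr_eq0 //; lra.
Qed.

Lemma convex_gradient_le x y : g x + g' x * (y - x) <= g y.
Proof.
case: (ltgtP x y) => [xy|yx|<-]; last by rewrite subrr mulr0 addr0.
- have [c /[!in_itv] /= /andP[xc _] e] := g_MVT xy.
  have : g' x <= g' c by rewrite derive1_mono ltW.
  nra.
- have [c /[!in_itv] /= /andP[_ cx] e] := g_MVT yx.
  have : g' c <= g' x by rewrite derive1_mono ltW.
  nra.
Qed.

Lemma ginv_continuous : continuous ginv.
Proof.
move=> y; have := @near_can_continuous R g' ginv (ginv y); rewrite ginvK.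
move=> /(_ _ _)/nbhs_singleton; apply; first by near=> z; rewrite g'K.
by near=> z; apply: g'_continuous.
Unshelve. all: by end_near.
Qed.

Definition box_argmin (a b q p : R) := clamp a b (ginv (- p) - q).

Section Box.
Variables (a b q p : R).
Hypothesis ab : a <= b.
Local Notation xh := (box_argmin a b q p).

(* the variational inequality [(g'(q + xh) + p) * (x - xh) >= 0] on the box,
   combined with the gradient inequality *)
Lemma box_argmin_le x : a <= x <= b -> g (q + xh) + p * xh <= g (q + x) + p * x.
Proof.
move=> /andP[ax xb]; rewrite /box_argmin; set z := ginv (- p) - q.
have g'z : g' (q + z) = - p by rewrite /z addrC subrK ginvK.
have : 0 <= (g' (q + clamp a b z) + p) * (x - clamp a b z).
  case: (clamp_cases z ab) => -[zab ->].
  - have : g' (q + z) <= g' (q + a) by rewrite derive1_mono lerD2l.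
    rewrite g'z; nra.
  - by rewrite g'z addNr mul0r.
  - have : g' (q + b) <= g' (q + z) by rewrite derive1_mono lerD2l.
    rewrite g'z; nra.
have := convex_gradient_le (q + clamp a b z) (q + x).
rewrite [q + x - _](_ : _ = x - clamp a b z); last by ring.
rewrite mulrDl; lra.
Qed.

Lemma box_argmin_unique x : a <= x <= b ->
  g (q + x) + p * x <= g (q + xh) + p * xh -> x = xh.
Proof.
move=> /andP[ax xb] le_x; apply/eqP/negP => /negP neq.
have /andP[ay yb] : a <= xh <= b by exact: clamp_itv.
have := strictly_convex_mid g_convex (_ : q + x != q + xh).
rewrite (can_eq (addKr q)) => /(_ neq).
have /box_argmin_le : a <= (x + xh) / 2 <= b by apply/andP; split; lra.
rewrite (_ : (q + x + (q + xh)) / 2 = q + (x + xh) / 2); last by field.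
lra.
Qed.

End Box.

Lemma box_argmin_continuous a b q : continuous (box_argmin a b q).
Proof.
move=> p; apply: (continuous_comp (f := fun p => ginv (- p) - q)).
  apply: cvgB; last exact: cvg_cst.
  by apply: (continuous_comp (f := -%R)); [exact: opp_continuous | exact: ginv_continuous].
exact: clamp_continuous.
Qed.

End ConvexScalar.

Section InnerProduct.
Variables (R : realType) (n : nat).
Implicit Types u v w : 'cV[R]_n.

Lemma dotvC u v : dotv u v = dotv v u.
Proof. by apply: eq_bigr => i _; rewrite mulrC. Qed.

Lemma dotvDl u w v : dotv (u + w) v = dotv u v + dotv w v.
Proof. by rewrite /dotv -big_split; apply: eq_bigr => i _; rewrite mxE mulrDl. Qed.

Lemma dotvNl u v : dotv (- u) v = - dotv u v.
Proof. by rewrite /dotv -sumrN; apply: eq_bigr => i _; rewrite mxE mulNr. Qed.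

Lemma dotvBl u w v : dotv (u - w) v = dotv u v - dotv w v.
Proof. by rewrite dotvDl dotvNl. Qed.

Lemma dotvZl t u v : dotv (t *: u) v = t * dotv u v.
Proof. by rewrite /dotv mulr_sumr; apply: eq_bigr => i _; rewrite mxE mulrA. Qed.

Lemma dotv0l v : dotv 0 v = 0.
Proof. by rewrite /dotv big1 // => i _; rewrite mxE mul0r. Qed.

Lemma dotvDr u v w : dotv u (v + w) = dotv u v + dotv u w.
Proof. by rewrite dotvC dotvDl !(dotvC u). Qed.

Lemma dotvNr u v : dotv u (- v) = - dotv u v.
Proof. by rewrite dotvC dotvNl dotvC. Qed.

Lemma dotvBr u v w : dotv u (v - w) = dotv u v - dotv u w.
Proof. by rewrite dotvDr dotvNr. Qed.

Lemma dotvZr t u v : dotv u (t *: v) = t * dotv u v.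
Proof. by rewrite dotvC dotvZl dotvC. Qed.

Lemma dotv0r u : dotv u 0 = 0.
Proof. by rewrite dotvC dotv0l. Qed.

Lemma dotv_delta (i : 'I_n) v : dotv (delta_mx i 0) v = v i 0.
Proof.
rewrite /dotv (bigD1 i) //= mxE !eqxx mul1r big1 ?addr0 // => j /negbTE ji.
by rewrite mxE ji mul0r.
Qed.

Lemma dotv_const1 v : dotv (const_mx 1) v = \sum_i v i 0.
Proof. by apply: eq_bigr => i _; rewrite mxE mul1r. Qed.

Lemma dotvv_ge0 v : 0 <= dotv v v.
Proof. by apply: sumr_ge0 => i _; rewrite -expr2 sqr_ge0. Qed.

Lemma dotvv_eq0 v : dotv v v = 0 -> v = 0.
Proof.
have vv_ge0 i : true -> 0 <= v i 0 * v i 0 by rewrite -expr2 sqr_ge0.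
move=> /(psumr_eq0P vv_ge0) vv0; apply/matrixP => i j; rewrite (ord1 j) mxE.
by have /eqP := vv0 i isT; rewrite mulf_eq0 orbb => /eqP.
Qed.

Lemma dotv_le0 u v : leV 0 u -> leV v 0 -> dotv u v <= 0.
Proof.
move=> u0 v0; apply: sumr_le0 => i _; apply: mulr_ge0_le0.
  by have := u0 i; rewrite mxE.
by have := v0 i; rewrite mxE.
Qed.

Lemma dotv_compl u v : (forall i, u i 0 * v i 0 = 0) -> dotv u v = 0.
Proof. by move=> uv0; apply: big1 => i _. Qed.

Lemma orthant_normal_cone u v : leV 0 u ->
  (forall du, leV 0 (u + du) -> dotv du v <= 0) ->
  leV v 0 /\ forall i, u i 0 * v i 0 = 0.
Proof.
move=> u0 normal; have u0i i : 0 <= u i 0 by have := u0 i; rewrite mxE.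
have up1 i : leV 0 (u + delta_mx i 0).
  by move=> k; rewrite !mxE addr_ge0 ?ler0n ?u0i.
have udown i : leV 0 (u + (- u i 0) *: delta_mx i 0).
  move=> k; rewrite !mxE; have [->|_] := eqVneq k i; first by rewrite !eqxx mulr1 subrr.
  by rewrite mulr0 addr0 u0i.
have v0 i : v i 0 <= 0 by have := normal _ (up1 i); rewrite dotv_delta.
split=> [i|i]; first by rewrite mxE v0.
have := normal _ (udown i); rewrite dotvZl dotv_delta mulNr oppr_le0 => uv0.
by apply/eqP; rewrite eq_le uv0 mulr_ge0_le0.
Qed.

Lemma cvg_dotv (T : Type) (F : set_system T) (FF : Filter F) u (v : T -> 'cV[R]_n) v0 :
  (forall i, v t i 0 @[t --> F] --> v0 i 0) -> dotv u (v t) @[t --> F] --> dotv u v0.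
Proof.
move=> v_cvg; apply: cvg_big => [|i _]; first exact: add_continuous.
by apply: cvgMr; exact: v_cvg.
Qed.

End InnerProduct.

Lemma diag_mx_mul_eq0 (R : realType) n (z : 'rV[R]_n) (y : 'cV[R]_n) :
  (forall i, 0 < z 0 i) -> diag_mx z *m y = 0 -> y = 0.
Proof.
move=> z_gt0 /matrixP zy0; apply/matrixP => i j; rewrite (ord1 j).
by have /eqP := zy0 i 0; rewrite mul_diag_mx !mxE mulf_eq0 gt_eqF //= => /eqP.
Qed.

Lemma projp_eq0 (R : realType) (x y : R) : (projp x y == 0) = (y <= 0) && (x * y == 0).
Proof.
rewrite /projp mulf_eq0; have [->|y0] := eqVneq y 0; first by rewrite if_same lexx eqxx orbT.
rewrite le_eqVlt (negPf y0) orbF /=; case: (x == 0); last by rewrite /= andbF (negPf y0).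
by rewrite /= andbT; case: ifP; rewrite ?eqxx ?(negPf y0).
Qed.

Lemma dotv_mulmx (R : realType) m n (A : 'M[R]_(m, n)) u v :
  dotv u (A *m v) = dotv (A^T *m u) v.
Proof.
rewrite /dotv; under eq_bigr do rewrite mxE mulr_sumr.
rewrite exchange_big /=; apply: eq_bigr => j _; rewrite !mxE mulr_suml.
by apply: eq_bigr => i _; rewrite !mxE mulrCA mulrA.
Qed.

Lemma col_projp_eq0 (R : realType) n (mu z : 'cV[R]_n) :
  \col_i projp (mu i 0) (z i 0) = 0 <-> leV z 0 /\ forall i, mu i 0 * z i 0 = 0.
Proof.
split=> [/matrixP mz0 | [z0 mz0]].
  have /(_ _)/andP cs i : (z i 0 <= 0) && (mu i 0 * z i 0 == 0).
    by rewrite -projp_eq0; have := mz0 i 0; rewrite !mxE => ->.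
  by split=> i; have [zi0 /eqP mzi0] := cs i; rewrite ?mxE.
apply/matrixP => i j; rewrite (ord1 j) !mxE; apply/eqP.
by rewrite projp_eq0 mz0 eqxx andbT; have := z0 i; rewrite mxE.
Qed.

Section Laplacian.
Variables (R : realType) (N L : nat) (src dst : 'I_L -> 'I_N) (Bv : 'rV[R]_L).
Hypothesis Bv_gt0 : forall l, 0 < Bv 0 l.
Local Notation C := (incidence R src dst).
Local Notation B := (diag_mx Bv).
Local Notation Lp := (lapl C B).

Let sum_delta (s : 'I_N) (x : 'I_N -> R) : \sum_i (i == s)%:R * x i = x s.
Proof. by rewrite (bigD1 s) //= eqxx mul1r big1 ?addr0 // => i /negbTE ->; rewrite mul0r. Qed.

Let sum_indicator (s : 'I_N) : \sum_i ((i == s)%:R : R) = 1.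
Proof. by rewrite (bigD1 s) //= eqxx big1 ?addr0 // => i /negbTE ->. Qed.

Lemma sum_incidence_mul (y : 'cV[R]_L) : \sum_i (C *m y) i 0 = 0.
Proof.
under eq_bigr do rewrite mxE; rewrite exchange_big big1 //= => l _.
rewrite -mulr_suml; under eq_bigr do rewrite mxE.
by rewrite sumrB !sum_indicator subrr mul0r.
Qed.

Lemma incidence_trE (x : 'cV[R]_N) l : (C^T *m x) l 0 = x (src l) 0 - x (dst l) 0.
Proof. by rewrite mxE; under eq_bigr do rewrite !mxE mulrBl; rewrite sumrB !sum_delta. Qed.

Lemma tr_flow : (B *m C^T)^T = C *m B.
Proof. by rewrite trmx_mul trmxK tr_diag_mx. Qed.

Lemma tr_lapl : Lp^T = Lp.
Proof. by rewrite /lapl !trmx_mul trmxK tr_diag_mx mulmxA. Qed.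

Lemma laplE (x : 'cV[R]_N) : Lp *m x = C *m (B *m C^T *m x).
Proof. by rewrite /lapl !mulmxA. Qed.

Lemma lapl_const1 : Lp *m (const_mx 1 : 'cV[R]_N) = 0.
Proof.
have C1 : C^T *m (const_mx 1 : 'cV[R]_N) = 0.
  by apply/matrixP => l j; rewrite (ord1 j) incidence_trE !mxE subrr.
by rewrite laplE -mulmxA C1 mulmx0 mulmx0.
Qed.

Lemma dotv_lapl (x : 'cV[R]_N) :
  dotv x (Lp *m x) = \sum_l Bv 0 l * ((C^T *m x) l 0) ^+ 2.
Proof.
rewrite laplE dotv_mulmx /dotv; apply: eq_bigr => l _.
by rewrite -mulmxA mul_diag_mx [X in _ * X]mxE mulrCA expr2.
Qed.

Lemma lapl_kernel (x : 'cV[R]_N) : Lp *m x = 0 -> C^T *m x = 0.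
Proof.
move=> Lx0; have : \sum_l Bv 0 l * ((C^T *m x) l 0) ^+ 2 = 0.
  by rewrite -dotv_lapl Lx0 dotv0r.
move=> /(psumr_eq0P (fun l _ => mulr_ge0 (ltW (Bv_gt0 l)) (sqr_ge0 _))) Bx0.
apply/matrixP => l j; rewrite (ord1 j) [RHS]mxE.
have /eqP := Bx0 l isT.
by rewrite mulf_eq0 sqrf_eq0 gt_eqF //= => /eqP.
Qed.

Lemma lapl_flow_inj (x x' : 'cV[R]_N) :
  Lp *m x = Lp *m x' -> B *m C^T *m x = B *m C^T *m x'.
Proof.
move=> /eqP; rewrite -subr_eq0 -mulmxBr => /eqP/lapl_kernel.
by rewrite mulmxBr => /eqP; rewrite subr_eq0 -!mulmxA => /eqP ->.
Qed.

Hypothesis connected : graph_connected src dst.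

Lemma incidence_tr_kernel (x : 'cV[R]_N) : C^T *m x = 0 -> forall i j, x i 0 = x j 0.
Proof.
move=> Cx0 i j; have /connectP[p + ->] := connected i j.
elim: p i => [|k p IH] i //= /andP[/existsP[l e] /IH <-].
have := congr1 (fun y : 'cV[R]_L => y l 0) Cx0; rewrite incidence_trE mxE.
by move=> /eqP; rewrite subr_eq0; case/orP: e => /andP[/eqP <- /eqP <-] /eqP.
Qed.

(* on a connected graph the kernel of [Lp] is spanned by [1], so [Lp Ld] is the
   identity on the balanced injections *)
Lemma lapl_pinvK (Ld : 'M[R]_N) (y : 'cV[R]_N) :
  is_MP_pinv Lp Ld -> \sum_i y i 0 = 0 -> Lp *m (Ld *m y) = y.
Proof.
move=> [LdL _ LLd_sym _] y0; set u := y - Lp *m (Ld *m y).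
have Lu0 : Lp *m u = 0.
  apply: trmx_inj; rewrite trmx0 trmx_mul tr_lapl /u linearB /= trmx_mul trmx_mul.
  by rewrite -mulmxA -trmx_mul LLd_sym mulmxBl -(mulmxA y^T) LdL subrr.
have u_const := incidence_tr_kernel (lapl_kernel Lu0).
have u0 : \sum_i u i 0 = 0.
  under eq_bigr do rewrite 2!mxE.
  by rewrite sumrB y0 laplE sum_incidence_mul subrr.
suff : u = 0 by move/eqP; rewrite subr_eq0 => /eqP <-.
apply/matrixP => i j; rewrite (ord1 j) [RHS]mxE; move: u0.
rewrite (eq_bigr (fun=> u i 0)) => [|k _]; last exact: u_const.
rewrite sumr_const card_ord => /eqP; rewrite mulrn_eq0 => /orP[/eqP N0|/eqP //].
by move: (ltn_ord i); rewrite {2}N0.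
Qed.

End Laplacian.

Arguments lapl_const1 {R N L src dst Bv}.

Section FlowProblems.
Variables (R : realType) (N L : nat) (src dst : 'I_L -> 'I_N) (Bv : 'rV[R]_L)
  (Dv : 'rV[R]_N) (Ldag : 'M[R]_N) (f : 'cV[R]_L) (qlo qhi : 'cV[R]_N)
  (c : 'I_N -> R -> R) (qb qp d : 'cV[R]_N).
Local Notation C := (incidence R src dst).
Local Notation B := (diag_mx Bv).
Local Notation D := (diag_mx Dv).
Local Notation Lp := (lapl C B).
Local Notation inj := (Defs.inj qb qp d).
Local Notation FR_feasible := (FR_feasible C B Ldag f qlo qhi qb qp d).
Local Notation FR_optimal := (FR_optimal C B Ldag f qlo qhi c qb qp d).
Local Notation FR_cost := (FR_cost c qp).
Local Notation FRp_feasible := (FRp_feasible C B D f qlo qhi qb qp d).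
Local Notation FRp_optimal := (FRp_optimal C B D f qlo qhi c qb qp d).
Local Notation FRp_cost := (FRp_cost D c qp).

Definition damping_cost (w : 'cV[R]_N) := \sum_n Dv 0 n * w n 0 ^+ 2 / 2.

Lemma FRp_costE r w : FRp_cost r w = FR_cost r + damping_cost w.
Proof.
rewrite /Defs.FRp_cost big_split; congr (_ + _).
by apply: eq_bigr => n _; rewrite mxE eqxx mulr1n.
Qed.

Lemma damping_cost0 : damping_cost 0 = 0.
Proof. by apply: big1 => n _; rewrite mxE expr0n mulr0 mul0r. Qed.

Hypothesis Dv_gt0 : forall n, 0 < Dv 0 n.

Let damping_term_ge0 (w : 'cV[R]_N) n : 0 <= Dv 0 n * w n 0 ^+ 2 / 2.
Proof. by rewrite divr_ge0 // mulr_ge0 ?sqr_ge0 // ltW. Qed.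

Lemma damping_cost_ge0 w : 0 <= damping_cost w.
Proof. by apply: sumr_ge0 => n _. Qed.

Lemma damping_cost_eq0 w : damping_cost w = 0 -> w = 0.
Proof.
move=> /(psumr_eq0P (fun n _ => damping_term_ge0 w n)) w0; apply/matrixP => n j.
rewrite (ord1 j) mxE; have /eqP := w0 n isT.
by rewrite !mulf_eq0 invr_eq0 pnatr_eq0 gt_eqF //= orbb orbF => /eqP.
Qed.

Lemma FRp_feasible_w0 r w v phi : FRp_feasible r w v phi ->
  FRp_feasible r 0 (B *m C^T *m phi) phi.
Proof. by case=> _ Lphi dphi box_r; split => //; rewrite mulmx0 subr0 Lphi laplE. Qed.

Lemma FRp_optimal_w0 r w v phi : FRp_optimal r w v phi -> w = 0.
Proof.
move=> [feas opt]; apply: damping_cost_eq0; apply/eqP; rewrite eq_le damping_cost_ge0.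
by have := opt _ _ _ _ (FRp_feasible_w0 feas); rewrite !FRp_costE damping_cost0 lerD2l andbT.
Qed.

Lemma FRp_optimal_cycle r w v phi : FRp_optimal r w v phi ->
  C *m (v - B *m C^T *m phi) = 0.
Proof.
move=> opt; have w0 := FRp_optimal_w0 opt; case: opt => -[bal Lphi _ _] _.
by rewrite mulmxBr -bal w0 mulmx0 subr0 Lphi laplE subrr.
Qed.

Hypothesis Bv_gt0 : forall l, 0 < Bv 0 l.
Hypothesis connected : graph_connected src dst.
Hypothesis Ldag_pinv : is_MP_pinv Lp Ldag.

Lemma FRp_flowsE r w v phi : FRp_feasible r w v phi ->
  Hmx C B Ldag *m inj r = B *m C^T *m phi.
Proof.
case=> _ -> _ _; rewrite /Hmx -mulmxA; apply: lapl_flow_inj => //.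
by case: Ldag_pinv => LdL _ _ _; rewrite (mulmxA Ldag) (mulmxA Lp) (mulmxA Lp Ldag) LdL.
Qed.

Lemma FRp_feasible_FR r w v phi : FRp_feasible r w v phi -> FR_feasible r.
Proof.
move=> feas; have flows := FRp_flowsE feas.
case: feas => _ Lphi [flo fhi] [lo hi]; split; rewrite ?flows //.
by rewrite Lphi laplE sum_incidence_mul.
Qed.

Lemma FR_feasible_FRp r : FR_feasible r ->
  FRp_feasible r 0 (B *m C^T *m (Ldag *m inj r)) (Ldag *m inj r).
Proof.
case=> lo hi bal flo fhi.
have Lphi : inj r = Lp *m (Ldag *m inj r) by rewrite lapl_pinvK.
split=> //; first by rewrite mulmx0 subr0 {1}Lphi laplE.
by rewrite mulmxA.
Qed.

Lemma FR_feasible_mid r1 r2 : FR_feasible r1 -> FR_feasible r2 ->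
  FR_feasible (2^-1 *: (r1 + r2)).
Proof.
have inj_mid : inj (2^-1 *: (r1 + r2)) = 2^-1 *: (inj r1 + inj r2).
  by apply/matrixP => i j; rewrite /Defs.inj !mxE; field.
case=> lo1 hi1 bal1 flo1 fhi1 [lo2 hi2 bal2 flo2 fhi2].
rewrite /Defs.FR_feasible inj_mid -scalemxAr mulmxDr.
split => [i|i||i|i].
- by move: (lo1 i) (lo2 i); rewrite !mxE; lra.
- by move: (hi1 i) (hi2 i); rewrite !mxE; lra.
- by under eq_bigr do rewrite 2!mxE; rewrite -mulr_sumr big_split /= bal1 bal2 addr0 mulr0.
- by move: (flo1 i) (flo2 i); rewrite !mxE; lra.
- by move: (fhi1 i) (fhi2 i); rewrite !mxE; lra.
Qed.

Hypothesis c_convex : forall n, strictly_convex (c n).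

Lemma FR_cost_mid_lt r1 r2 : r1 != r2 ->
  FR_cost (2^-1 *: (r1 + r2)) < 2^-1 * (FR_cost r1 + FR_cost r2).
Proof.
move=> r12; have [j rj] : exists j, r1 j 0 != r2 j 0.
  apply/existsP; apply: contraR r12; rewrite negb_exists => /forallP r12.
  by apply/eqP/matrixP => i k; rewrite (ord1 k); apply/eqP; rewrite -[_ == _]negbK r12.
pose cost_at i (x : R) := c i (qp i 0 + x).
have mid_lt i : r1 i 0 != r2 i 0 ->
    cost_at i ((2^-1 *: (r1 + r2)) i 0) < 2^-1 * (cost_at i (r1 i 0) + cost_at i (r2 i 0)).
  move=> ri; have := strictly_convex_mid (c_convex i) (_ : qp i 0 + r1 i 0 != qp i 0 + r2 i 0).
  rewrite (can_eq (addKr _)) => /(_ ri); rewrite /cost_at !mxE mulrC.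
  by congr (c i _ < _); field.
have mid_le i :
    cost_at i ((2^-1 *: (r1 + r2)) i 0) <= 2^-1 * (cost_at i (r1 i 0) + cost_at i (r2 i 0)).
  have [r12i | ri] := eqVneq (r1 i 0) (r2 i 0); last exact/ltW/mid_lt.
  have half (x : R) : 2^-1 * (x + x) = x by field.
  by rewrite !mxE r12i !half.
rewrite /Defs.FR_cost -big_split mulr_sumr (bigD1 j) // [X in _ < X](bigD1 j) //=.
by apply: ltr_leD; [exact: mid_lt | apply: ler_sum => i _; exact: mid_le].
Qed.

Lemma FR_optimal_unique r1 r2 : FR_optimal r1 -> FR_optimal r2 -> r1 = r2.
Proof.
move=> [feas1 opt1] [feas2 opt2]; apply/eqP/negP => /negP r12.
have := opt1 _ (FR_feasible_mid feas1 feas2); have := opt2 _ feas1.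
have := FR_cost_mid_lt r12; lra.
Qed.

Lemma FRp_optimal_FR r w v phi : FRp_optimal r w v phi -> FR_optimal r.
Proof.
move=> opt; have w0 := FRp_optimal_w0 opt; case: opt => feas opt; split.
  exact: FRp_feasible_FR feas.
move=> r2 /FR_feasible_FRp/opt; rewrite !FRp_costE w0 damping_cost0 !addr0; exact.
Qed.

End FlowProblems.

Section Duality.
Variables (R : realType) (N L : nat) (src dst : 'I_L -> 'I_N) (Bv : 'rV[R]_L)
  (Dv : 'rV[R]_N) (f : 'cV[R]_L) (qlo qhi : 'cV[R]_N)
  (c cinv : 'I_N -> R -> R) (qb qp d : 'cV[R]_N).
Local Notation C := (incidence R src dst).
Local Notation B := (diag_mx Bv).
Local Notation D := (diag_mx Dv).
Local Notation Lp := (lapl C B).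
Local Notation inj := (Defs.inj qb qp d).
Local Notation box := (Defs.box qlo qhi qp).
Local Notation FRp_feasible := (FRp_feasible C B D f qlo qhi qb qp d).
Local Notation FRp_cost := (FRp_cost D c qp).
Local Notation Lag := (FRp_lagrangian C B D f c qb qp d).
Local Notation dual := (FRp_dual C B D f qlo qhi c qb qp d).

Hypotheses (Dv_gt0 : forall n, 0 < Dv 0 n) (c_convex : forall n, strictly_convex (c n))
  (c_cont_diff : forall n, cont_diff (c n))
  (cinvK : forall n, cancel (derive1 (c n)) (cinv n) /\ cancel (cinv n) (derive1 (c n)))
  (qlo_le_qhi : leV qlo qhi).

(* the minimiser of the Lagrangian over the box (e) at zero frequency deviation *)
Definition lagr_argmin (pi : 'cV[R]_N) := r_ctrl qlo qhi cinv qp 0 pi.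

Definition priced_cost (pi r : 'cV[R]_N) := \sum_n (c n (qp n 0 + r n 0) + pi n 0 * r n 0).

Lemma boxP r : box r <-> forall n, qlo n 0 - qp n 0 <= r n 0 <= qhi n 0 - qp n 0.
Proof.
split=> [[lo hi] n | r_box]; first by move: (lo n) (hi n); rewrite !mxE => ? ?; lra.
by split=> n; move: (r_box n); rewrite !mxE => /andP[? ?]; lra.
Qed.

Let box_itv n : qlo n 0 - qp n 0 <= qhi n 0 - qp n 0.
Proof. by rewrite lerD2r; have := qlo_le_qhi n. Qed.

Lemma lagr_argminE pi n : lagr_argmin pi n 0 =
  box_argmin (cinv n) (qlo n 0 - qp n 0) (qhi n 0 - qp n 0) (qp n 0) (pi n 0).
Proof. by rewrite !mxE oppr0 sub0r. Qed.

Lemma box_lagr_argmin pi : box (lagr_argmin pi).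
Proof. by apply/boxP => n; rewrite lagr_argminE clamp_itv. Qed.

Let argmin_coord_le pi n (x : R) : qlo n 0 - qp n 0 <= x <= qhi n 0 - qp n 0 ->
  c n (qp n 0 + lagr_argmin pi n 0) + pi n 0 * lagr_argmin pi n 0
    <= c n (qp n 0 + x) + pi n 0 * x.
Proof.
rewrite lagr_argminE; case: (c_cont_diff n) (cinvK n) => [? ?] [? ?].
exact: (box_argmin_le (c_convex n) _ _ _ _ _ _ (box_itv n)).
Qed.

Lemma priced_cost_min pi r : box r -> priced_cost pi (lagr_argmin pi) <= priced_cost pi r.
Proof. by move/boxP => r_box; apply: ler_sum => n _; exact: argmin_coord_le. Qed.

Lemma priced_cost_argmin_unique pi r : box r ->
  priced_cost pi r <= priced_cost pi (lagr_argmin pi) -> r = lagr_argmin pi.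
Proof.
move=> /boxP r_box le_r; set x := lagr_argmin pi.
have gap_ge0 n : 0 <= (c n (qp n 0 + r n 0) + pi n 0 * r n 0)
    - (c n (qp n 0 + x n 0) + pi n 0 * x n 0).
  by rewrite subr_ge0 argmin_coord_le.
have /(psumr_eq0P (fun n _ => gap_ge0 n)) gap0 :
    \sum_n ((c n (qp n 0 + r n 0) + pi n 0 * r n 0)
             - (c n (qp n 0 + x n 0) + pi n 0 * x n 0)) = 0.
  by apply/eqP; rewrite eq_le sumr_ge0 // andbT sumrB subr_le0.
apply/matrixP => n j; rewrite (ord1 j) /x lagr_argminE.
case: (c_cont_diff n) (cinvK n) => [? ?] [? ?].
apply: (box_argmin_unique (c_convex n) _ _ _ _ (box_itv n) (r_box n)) => //.
by rewrite -(lagr_argminE pi n); have /eqP := gap0 n isT; rewrite subr_eq0 => /eqP ->.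
Qed.

Lemma lagr_argmin_continuous pi dl n :
  continuous (fun t : R => lagr_argmin (pi + t *: dl) n 0).
Proof.
have -> : (fun t : R => lagr_argmin (pi + t *: dl) n 0) =
    box_argmin (cinv n) (qlo n 0 - qp n 0) (qhi n 0 - qp n 0) (qp n 0)
    \o (fun t => pi n 0 + t * dl n 0).
  by apply/funext => t; rewrite /= lagr_argminE !mxE.
move=> t; apply: continuous_comp.
  by apply: cvgD; [exact: cvg_cst | apply: cvgMl; exact: cvg_id].
by case: (c_cont_diff n) (cinvK n) => [? ?] [? ?]; exact: box_argmin_continuous.
Qed.

Definition dual_stationary (pi : 'cV[R]_N) (mulo muhi : 'cV[R]_L) :=
  Lp *m pi = C *m B *m (muhi - mulo).

Definition compl_slack (mulo muhi : 'cV[R]_L) (phi : 'cV[R]_N) :=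
  (forall l, muhi l 0 * (B *m C^T *m phi - f) l 0 = 0) /\
  (forall l, mulo l 0 * (- f - B *m C^T *m phi) l 0 = 0).

Definition dual_value pi (mulo muhi : 'cV[R]_L) :=
  priced_cost pi (lagr_argmin pi) + dotv pi (qb + qp - d) - dotv (muhi + mulo) f.

Lemma lagrangianE r w v phi pi mulo muhi : Lag r w v phi 0 pi mulo muhi =
  priced_cost pi r + dotv pi (qb + qp - d) + damping_cost Dv w - dotv (muhi + mulo) f
  + dotv (C *m B *m (muhi - mulo) - Lp *m pi) phi.
Proof.
have costE : FRp_cost r w + dotv pi (inj r) =
    priced_cost pi r + dotv pi (qb + qp - d) + damping_cost Dv w.
  rewrite FRp_costE /Defs.inj (addrAC (qb + qp) r) (dotvDr pi (qb + qp - d) r).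
  by rewrite /priced_cost /Defs.FR_cost /dotv big_split /=; lra.
rewrite /FRp_lagrangian dotv0l addr0 (dotvBr pi (inj r)) addrA costE.
rewrite (dotv_mulmx Lp) tr_lapl !dotvBr dotvNr !(dotv_mulmx (B *m C^T)) tr_flow.
rewrite mulmxBr !dotvBl dotvDl; lra.
Qed.

Lemma lagrangian_stationaryE r w v phi pi mulo muhi : dual_stationary pi mulo muhi ->
  Lag r w v phi 0 pi mulo muhi =
  priced_cost pi r + dotv pi (qb + qp - d) + damping_cost Dv w - dotv (muhi + mulo) f.
Proof. by move=> stat; rewrite lagrangianE stat subrr dotv0l addr0. Qed.

Lemma lagrangian_feasibleE r w v phi lam pi mulo muhi :
  inj r - D *m w = C *m v -> inj r = Lp *m phi ->
  Lag r w v phi lam pi mulo muhi = FRp_cost r w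
    + dotv muhi (B *m C^T *m phi - f) + dotv mulo (- f - B *m C^T *m phi).
Proof. by move=> bal Lphi; rewrite /FRp_lagrangian bal Lphi !subrr !dotv0r !addr0. Qed.

Lemma lagrangian_le_cost r w v phi lam pi mulo muhi : FRp_feasible r w v phi ->
  leV 0 mulo -> leV 0 muhi -> Lag r w v phi lam pi mulo muhi <= FRp_cost r w.
Proof.
case=> bal Lphi [flo fhi] _ mulo0 muhi0; rewrite lagrangian_feasibleE //.
have : dotv muhi (B *m C^T *m phi - f) <= 0.
  by apply: dotv_le0 => // l; move: (fhi l); rewrite !mxE subr_le0.
have : dotv mulo (- f - B *m C^T *m phi) <= 0.
  by apply: dotv_le0 => // l; move: (flo l); rewrite !mxE subr_le0.
lra.
Qed.

Lemma lagrangian_compl_slack r w v phi lam pi mulo muhi :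
  inj r - D *m w = C *m v -> inj r = Lp *m phi -> compl_slack mulo muhi phi ->
  Lag r w v phi lam pi mulo muhi = FRp_cost r w.
Proof. by move=> bal Lphi [hi lo]; rewrite lagrangian_feasibleE // !dotv_compl // !addr0. Qed.

Lemma dual_le_lagrangian lam pi mulo muhi r w v phi : box r ->
  (dual lam pi mulo muhi <= (Lag r w v phi lam pi mulo muhi)%:E)%E.
Proof. by move=> box_r; apply: ereal_inf_lbound; exists r, w, v, phi. Qed.

Lemma dual_stationaryE pi mulo muhi : dual_stationary pi mulo muhi ->
  dual 0 pi mulo muhi = (dual_value pi mulo muhi)%:E.
Proof.
move=> stat; apply/eqP; rewrite eq_le; apply/andP; split.
  apply: le_trans (dual_le_lagrangian _ _ _ _ 0 0 0 (box_lagr_argmin pi)) _.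
  by rewrite lagrangian_stationaryE // damping_cost0 addr0.
apply: le_ereal_inf_tmp => _ [r [w [v [phi [box_r ->]]]]].
rewrite lee_fin lagrangian_stationaryE // /dual_value.
have := priced_cost_min pi box_r; have := damping_cost_ge0 Dv_gt0 w; lra.
Qed.

Local Notation dual_optimal := (FRp_dual_optimal C B D f qlo qhi c qb qp d 0).

Lemma kkt_dual_optimal r v phi pi mulo muhi : FRp_feasible r 0 v phi ->
  r = lagr_argmin pi -> dual_stationary pi mulo muhi -> compl_slack mulo muhi phi ->
  leV 0 mulo -> leV 0 muhi -> dual_optimal pi mulo muhi.
Proof.
move=> rfeas r_eq stat cs mulo0 muhi0; split=> // lam pi2 mulo2 muhi2 [mulo2_0 muhi2_0].
have [bal Lphi _ box_r] := rfeas.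
apply: le_trans (@dual_le_lagrangian lam pi2 mulo2 muhi2 r 0 v phi box_r) _.
rewrite dual_stationaryE // lee_fin /dual_value -r_eq.
have := @lagrangian_stationaryE r 0 v phi pi mulo muhi stat.
rewrite damping_cost0 addr0 => <-.
rewrite (@lagrangian_compl_slack r 0 v phi 0 pi mulo muhi bal Lphi cs).
exact: lagrangian_le_cost.
Qed.

(* off stationarity the dual function is unbounded below along [phi] *)
Lemma dual_optimal_stationary pi mulo muhi :
  dual_optimal pi mulo muhi -> dual_stationary pi mulo muhi.
Proof.
move=> [_ opt]; set z := C *m B *m (muhi - mulo) - Lp *m pi.
have stat0 : dual_stationary 0 0 0 by rewrite /dual_stationary mulmx0 subrr mulmx0.
have lb : ((dual_value 0 0 0)%:E <= dual 0 pi mulo muhi)%E.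
  by rewrite -dual_stationaryE //; apply: opt; split=> i; rewrite mxE.
set x := lagr_argmin pi; set A := Lag x 0 0 0 0 pi mulo muhi.
have ub s : (dual 0 pi mulo muhi <= (A - s * dotv z z)%:E)%E.
  apply: le_trans (@dual_le_lagrangian 0 pi mulo muhi x 0 0 (- s *: z) (box_lagr_argmin pi)) _.
  by rewrite lee_fin /A !lagrangianE -/z dotvZr dotv0r addr0 mulNr.
have zz_le0 : dotv z z <= 0.
  rewrite leNgt; apply/negP => zz_gt0.
  have := le_trans lb (ub ((A - dual_value 0 0 0 + 1) / dotv z z)).
  by rewrite lee_fin divfK ?gt_eqF //; lra.
have /dotvv_eq0 : dotv z z = 0 by apply/eqP; rewrite eq_le zz_le0 dotvv_ge0.
by move/eqP; rewrite subr_eq0 => /eqP zE; rewrite /dual_stationary zE.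
Qed.

Lemma priced_costD pi dl t r : priced_cost (pi + t *: dl) r = priced_cost pi r + t * dotv dl r.
Proof.
rewrite /priced_cost /dotv mulr_sumr -big_split; apply: eq_bigr => i _.
by rewrite /= !mxE mulrDl addrA mulrA.
Qed.

(* Danskin's argument: along a stationarity-preserving direction the dual value
   at [pi + t dl] exceeds that at [pi] by [t * h t], and [h t] tends to the
   difference of the two sides as [t -> 0+] because the Lagrangian minimiser
   depends continuously on the prices. *)
Lemma dual_optimal_ascent pi mulo muhi dl (dlo dhi : 'cV[R]_L) :
  dual_optimal pi mulo muhi -> dual_stationary pi mulo muhi ->
  Lp *m dl = C *m B *m (dhi - dlo) -> leV 0 (mulo + dlo) -> leV 0 (muhi + dhi) ->
  dotv dl (inj (lagr_argmin pi)) <= dotv (dhi + dlo) f.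
Proof.
move=> [[mulo0 muhi0] opt] stat Ldl lo hi.
pose h t := dotv dl (qb + qp - d) + dotv dl (lagr_argmin (pi + t *: dl)) - dotv (dhi + dlo) f.
have h_cvg : h t @[t --> (0 : R)^'+] --> h 0.
  apply: cvg_at_right_filter; apply: cvgB; last exact: cvg_cst.
  apply: cvgD; first exact: cvg_cst.
  by apply: cvg_dotv => n; exact: lagr_argmin_continuous.
have step t : 0 < t -> t < 1 -> t * h t <= 0.
  move=> t_gt0 t_lt1; set pit := pi + t *: dl.
  have feas : FRp_dual_feasible 0 pit (mulo + t *: dlo) (muhi + t *: dhi).
    split=> l; [move: (mulo0 l) (lo l) | move: (muhi0 l) (hi l)]; rewrite !mxE; nra.
  have stat_t : dual_stationary pit (mulo + t *: dlo) (muhi + t *: dhi).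
    rewrite /dual_stationary mulmxDr -scalemxAr stat Ldl scalemxAr -mulmxDr.
    by congr (_ *m _); apply/matrixP => i j; rewrite !mxE; ring.
  have := opt _ _ _ _ feas; rewrite !dual_stationaryE // lee_fin /dual_value.
  rewrite priced_costD /pit dotvDl dotvZl.
  rewrite (_ : muhi + t *: dhi + (mulo + t *: dlo) = muhi + mulo + t *: (dhi + dlo)).
    have := priced_cost_min pi (box_lagr_argmin pit).
    by rewrite dotvDl dotvZl /h mulrBr mulrDr; lra.
  by apply/matrixP => i j; rewrite !mxE; ring.
have -> : dotv dl (inj (lagr_argmin pi)) = dotv dl (qb + qp - d) + dotv dl (lagr_argmin pi).
  by rewrite -dotvDr /Defs.inj addrAC.
rewrite -subr_le0 -[pi in lagr_argmin pi](addr0 pi) -(scale0r dl) -/(h 0).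
rewrite leNgt; apply/negP => h0_gt0.
have /filter_ex[t [[t_gt0 t_lt1] ht_gt0]] :
    \forall t \near (0 : R)^'+, (0 < t /\ t < 1) /\ 0 < h t.
  near=> t; split; first split; near: t.
  - exact: nbhs_right_gt.
  - exact: nbhs_right_lt ltr01.
  - exact: cvgr_gt h_cvg _ h0_gt0.
by have := step t t_gt0 t_lt1; rewrite leNgt mulr_gt0.
Unshelve. all: by end_near.
Qed.

Variable Ldag : 'M[R]_N.
Hypotheses (Bv_gt0 : forall l, 0 < Bv 0 l) (connected : graph_connected src dst)
  (Ldag_pinv : is_MP_pinv Lp Ldag).

(* [Lp 1 = 0], so [+1] and [-1] are both admissible directions *)
Lemma dual_optimal_balanced pi mulo muhi :
  dual_optimal pi mulo muhi -> \sum_i inj (lagr_argmin pi) i 0 = 0.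
Proof.
move=> opt; have stat := dual_optimal_stationary opt; have [[mulo0 muhi0] _] := opt.
have ascent dl : Lp *m dl = 0 -> dotv dl (inj (lagr_argmin pi)) <= 0.
  move=> Ldl; have := @dual_optimal_ascent pi mulo muhi dl 0 0 opt stat.
  by rewrite subrr mulmx0 !addr0 dotv0l; apply.
have := ascent _ lapl_const1; have := ascent (- const_mx 1).
rewrite mulmxN lapl_const1 oppr0 dotvNl dotv_const1 oppr_le0 => /(_ erefl) ge0 le0.
by apply/eqP; rewrite eq_le le0 ge0.
Qed.

Lemma dual_optimal_primal_feasible pi mulo muhi : dual_optimal pi mulo muhi ->
  exists phi, FRp_feasible (lagr_argmin pi) 0 (B *m C^T *m phi) phi
              /\ compl_slack mulo muhi phi.
Proof.
move=> opt; have stat := dual_optimal_stationary opt; have [[mulo0 muhi0] _] := opt.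
set x := lagr_argmin pi; set phi := Ldag *m inj x; set y := B *m C^T *m phi.
have Lphi : Lp *m phi = inj x by rewrite lapl_pinvK // (dual_optimal_balanced opt).
have ascent dlo dhi : leV 0 (mulo + dlo) -> leV 0 (muhi + dhi) ->
    dotv dhi (y - f) + dotv dlo (- f - y) <= 0.
  move=> lo hi; set dl := Ldag *m (C *m (B *m (dhi - dlo))).
  have Ldl : Lp *m dl = C *m B *m (dhi - dlo).
    by rewrite lapl_pinvK ?sum_incidence_mul // mulmxA.
  have := @dual_optimal_ascent pi mulo muhi dl dlo dhi opt stat Ldl lo hi.
  rewrite -Lphi dotv_mulmx tr_lapl Ldl -tr_flow -dotv_mulmx -/y.
  by rewrite dotvBl !dotvBr dotvNr dotvDl; lra.
have [yf0 hi_cs] : leV (y - f) 0 /\ forall l, muhi l 0 * (y - f) l 0 = 0.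
  apply: orthant_normal_cone => // dhi hi.
  by have := ascent 0 dhi; rewrite addr0 dotv0l addr0; apply.
have [fy0 lo_cs] : leV (- f - y) 0 /\ forall l, mulo l 0 * (- f - y) l 0 = 0.
  apply: orthant_normal_cone => // dlo lo.
  by have := ascent dlo 0; rewrite addr0 dotv0l add0r; apply.
exists phi; split; last by split.
split; [by rewrite mulmx0 subr0 -Lphi laplE | by [] | | exact: box_lagr_argmin].
by split=> l; [move: (fy0 l) | move: (yf0 l)]; rewrite !mxE subr_le0 // lerNl.
Qed.

Lemma primal_dual_optimal_kkt r v phi pi mulo muhi :
  FRp_optimal C B D f qlo qhi c qb qp d r 0 v phi -> dual_optimal pi mulo muhi ->
  [/\ r = lagr_argmin pi, dual_stationary pi mulo muhi & compl_slack mulo muhi phi].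
Proof.
move=> [rfeas ropt] opt; have stat := dual_optimal_stationary opt.
have [[mulo0 muhi0] _] := opt.
have [phix [xfeas xcs]] := dual_optimal_primal_feasible opt.
set x := lagr_argmin pi in xfeas xcs *.
have value_x : dual_value pi mulo muhi = FRp_cost x 0.
  case: xfeas => bal Lphi _ _.
  by rewrite -(@lagrangian_compl_slack x 0 _ phix 0 pi _ _ bal Lphi xcs) lagrangian_stationaryE
    // damping_cost0 addr0.
have r_eq : r = x.
  case: (rfeas) => _ _ _ box_r; apply: priced_cost_argmin_unique box_r _.
  have := @lagrangian_le_cost r 0 v phi 0 pi mulo muhi rfeas mulo0 muhi0.
  rewrite lagrangian_stationaryE // damping_cost0 addr0.
  have := ropt _ _ _ _ xfeas; move: value_x; rewrite /dual_value; lra.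
split=> //; rewrite /compl_slack -(FRp_flowsE Bv_gt0 Ldag_pinv rfeas) r_eq.
by rewrite (FRp_flowsE Bv_gt0 Ldag_pinv xfeas).
Qed.

End Duality.

Section Equilibrium.
Variables (R : realType) (N L : nat) (src dst : 'I_L -> 'I_N) (Bv : 'rV[R]_L)
  (Dv Mv : 'rV[R]_N) (Ldag : 'M[R]_N) (f : 'cV[R]_L) (qlo qhi : 'cV[R]_N)
  (c cinv : 'I_N -> R -> R) (qb qp d : 'cV[R]_N)
  (zpi chiphi : 'rV[R]_N) (zmuhi zmulo : 'rV[R]_L).
Local Notation C := (incidence R src dst).
Local Notation B := (diag_mx Bv).
Local Notation D := (diag_mx Dv).
Local Notation Lp := (lapl C B).
Hypotheses (Bv_gt0 : forall l, 0 < Bv 0 l) (Dv_gt0 : forall n, 0 < Dv 0 n)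
  (connected : graph_connected src dst) (Ldag_pinv : is_MP_pinv Lp Ldag)
  (c_convex : forall n, strictly_convex (c n))
  (c_cont_diff : forall n, cont_diff (c n))
  (cinvK : forall n, cancel (derive1 (c n)) (cinv n) /\ cancel (cinv n) (derive1 (c n)))
  (qlo_le_qhi : leV qlo qhi)
  (chiphi_gt0 : forall n, 0 < chiphi 0 n)
  (zmuhi_gt0 : forall l, 0 < zmuhi 0 l) (zmulo_gt0 : forall l, 0 < zmulo 0 l).

(* The angles [theta] are taken equal to the potentials [phi].  The [omega] and
   [pi] equations then hold at every feasible point by constraint (c), so
   neither [M] nor [zpi] needs to be positive. *)
Lemma cl_equilibrium_iff_primal_dual_optimal r v phi pi mulo muhi :
  FRp_optimal C B D f qlo qhi c qb qp d r 0 v phi ->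
  cl_equilibrium C B D (diag_mx Mv) f qlo qhi cinv qb qp d
    (diag_mx zpi) (diag_mx chiphi) (diag_mx zmuhi) (diag_mx zmulo) r 0 phi phi pi mulo muhi
  <-> FRp_primal_dual_optimal C B D f qlo qhi c qb qp d r 0 v phi pi mulo muhi.
Proof.
move=> ropt; have [[bal Lphi [flo fhi] box_r] _] := ropt.
have hi_le0 : leV (B *m C^T *m phi - f) 0.
  by move=> l; move: (fhi l); rewrite !mxE subr_le0.
have lo_le0 : leV (- f - B *m C^T *m phi) 0.
  by move=> l; move: (flo l); rewrite !mxE subr_le0 lerNl.
split.
- move=> [r_eq [[mulo0 muhi0] [_ [_ [_ [muhi_dot [mulo_dot phi_dot]]]]]]].
  have stat : Lp *m pi = C *m B *m (muhi - mulo).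
    by apply/eqP; rewrite -subr_eq0; apply/eqP; exact: diag_mx_mul_eq0 phi_dot.
  have [_ hi_cs] := iffLR (col_projp_eq0 _ _) (diag_mx_mul_eq0 zmuhi_gt0 muhi_dot).
  have [_ lo_cs] := iffLR (col_projp_eq0 _ _) (diag_mx_mul_eq0 zmulo_gt0 mulo_dot).
  split=> //; apply: (kkt_dual_optimal Dv_gt0 c_convex c_cont_diff cinvK qlo_le_qhi
    ropt.1 r_eq stat) => //.
- move=> [_ dopt].
  have [r_eq stat [hi_cs lo_cs]] :=
    primal_dual_optimal_kkt Dv_gt0 c_convex c_cont_diff cinvK qlo_le_qhi Bv_gt0 connected
      Ldag_pinv ropt dopt.
  have inj_res : Defs.inj qb qp d r - Lp *m phi = 0 by rewrite Lphi subrr.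
  split=> //; split; first exact: dopt.1.
  split=> //; split; first by rewrite mulmx0 subr0 inj_res mulmx0.
  split; first by rewrite inj_res mulmx0.
  split; first by rewrite (iffRL (col_projp_eq0 _ _) (conj hi_le0 hi_cs)) mulmx0.
  split; first by rewrite (iffRL (col_projp_eq0 _ _) (conj lo_le0 lo_cs)) mulmx0.
  by rewrite stat subrr mulmx0.
Qed.

End Equilibrium.

Theorem proposition1 (R : realType) (N L : nat)
  (src dst : 'I_L -> 'I_N) (Bv : 'rV[R]_L) (Dv Mv : 'rV[R]_N)
  (Ldag : 'M[R]_N) (f : 'cV[R]_L) (qlo qhi : 'cV[R]_N)
  (c cinv : 'I_N -> R -> R)
  (zpi chiphi : 'rV[R]_N) (zmuhi zmulo : 'rV[R]_L)
  (qb qp d : 'cV[R]_N)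
  (r r' w' : 'cV[R]_N) (v' : 'cV[R]_L) (phi' : 'cV[R]_N) :
  let C := incidence R src dst in
  let B := diag_mx Bv in
  let D := diag_mx Dv in
  let M := diag_mx Mv in
  graph_connected src dst ->
  (forall l, 0 < Bv 0 l) -> (forall n, 0 < Dv 0 n) -> (forall n, 0 < Mv 0 n) ->
  is_MP_pinv (lapl C B) Ldag ->
  (forall n, strictly_convex (c n)) ->
  (forall n, cont_diff (c n)) ->
  (forall n, cancel (derive1 (c n)) (cinv n) /\ cancel (cinv n) (derive1 (c n))) ->
  (forall n, 0 < zpi 0 n) -> (forall n, 0 < chiphi 0 n) ->
  (forall l, 0 < zmuhi 0 l) -> (forall l, 0 < zmulo 0 l) ->
  FR_optimal C B Ldag f qlo qhi c qb qp d r ->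
  FRp_optimal C B D f qlo qhi c qb qp d r' w' v' phi' ->
  [/\ w' = 0,
      r = r',
      Hmx C B Ldag *m (qb + qp + r - d) = B *m C^T *m phi'
    & exists (theta' : 'cV[R]_N) (y' : 'cV[R]_L),
        [/\ C *m y' = 0,
            v' = B *m C^T *m theta' + y',
            B *m C^T *m phi' = B *m C^T *m theta'
          & forall (pi' : 'cV[R]_N) (mulo' muhi' : 'cV[R]_L),
              cl_equilibrium C B D M f qlo qhi cinv qb qp d
                (diag_mx zpi) (diag_mx chiphi) (diag_mx zmuhi) (diag_mx zmulo)
                r' w' theta' phi' pi' mulo' muhi'
              <->
              FRp_primal_dual_optimal C B D f qlo qhi c qb qp d
                r' w' v' phi' pi' mulo' muhi']].
Proof.
move=> C B D M connected Bv_gt0 Dv_gt0 _ Ldag_pinv c_convex c_cont_diff cinvK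
  _ chiphi_gt0 zmuhi_gt0 zmulo_gt0 FRopt FRpopt.
have w'0 := FRp_optimal_w0 Dv_gt0 FRpopt; subst w'.
have r'E := FR_optimal_unique c_convex FRopt
  (FRp_optimal_FR Dv_gt0 Bv_gt0 connected Ldag_pinv FRpopt); subst r'.
have qlo_le_qhi : leV qlo qhi.
  by case: FRpopt => -[_ _ _ [lo hi]] _ n; move: (lo n) (hi n); rewrite !mxE; exact: le_trans.
split=> //; first by have := FRp_flowsE Bv_gt0 Ldag_pinv FRpopt.1.
exists phi', (v' - B *m C^T *m phi'); split=> //.
- by have := FRp_optimal_cycle Dv_gt0 FRpopt.
- by rewrite addrC subrK.
- move=> pi mulo muhi.
  by have := cl_equilibrium_iff_primal_dual_optimal Mv zpi Bv_gt0 Dv_gt0 connected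
    Ldag_pinv c_convex c_cont_diff cinvK qlo_le_qhi chiphi_gt0 zmuhi_gt0 zmulo_gt0
    pi mulo muhi FRpopt.
Qed.
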